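(* Consider the redundancy system with scaled Bernoulli service requirements and its auxiliary system, both as described in the context, driven by the same arrivals and the same replica service requirement draws, and started in the same initial workload state $\tilde{\boldsymbol{\omega}}$ with $\tilde\omega_{(1)}=\dots=\tilde\omega_{(d)}$, i.e. $\tilde{\boldsymbol{\omega}}(0)=\boldsymbol{\omega}(0)=\tilde{\boldsymbol{\omega}}$. Then for all $t\ge 0$ and all $i=1,\dots,N$, $$\tilde\omega_{(1)}(t)-\tilde\omega_{(i)}(t)\ \ge\ \omega_{(1)}(t)-\omega_{(i)}(t).$$
   Context: Original system: $N$ parallel servers; jobs arrive according to a Poisson process of rate $\lambda$. Each arriving job is replicated into $d$ replicas ($1\le d\le N$), sent to $d$ distinct servers chosen uniformly at random without replacement. Replicas are served FCFS at each server; a job completes as soon as its first replica completes, and the other replicas are then instantaneously abandoned. Replica service requirements are i.i.d. copies of $B$, where $B=XK$ with probability $1-p$ and $B=0$ with probability $p$; here $K\ge1$ is a fixed real number, $X$ is a strictly positive random variable with $\mathbb{E}[X]=1$, and $p=1-1/K$ (so $\mathbb{E}[B]=1$). The workload $\omega_i$ of server $i$ is the real amount of work it must do to become idle absent further arrivals; between arrivals positive workloads decrease at unit rate. If a job arrives with sampled servers $s_1,\dots,s_d$ and replica requirements $b_1,\dots,b_d$, the new workload at $s_l$ is $\max\{\min_j(\omega_{s_j}+b_j),\omega_{s_l}\}$, other servers unchanged. $\omega_{(1)}\ge\dots\ge\omega_{(N)}$ denote the ordered workloads. The system is in synchronicity when all $N$ workloads are equal. A job is of type $A$ if none of its $d$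 replicas has requirement $0$ (its requirements are then $X_1K,\dots,X_dK$ with $X_j$ i.i.d. copies of $X$), of type $B$ if between $1$ and $d-1$ of its replicas have requirement $0$, and of type $C$ if all replicas have requirement $0$. A type-$B_1$ job is one whose $d-1$ replicas, at least one of which has requirement $0$, are allocated to the $d-1$ servers with the largest workloads (first $d-1$ ordered servers), and whose remaining replica, with requirement $X_dK$, is allocated to the server with the smallest workload (the $N$-th ordered server). Auxiliary system (workloads $\tilde{\boldsymbol{\omega}}(t)$): identical to the original system, driven by the same arrivals and service requirement draws, except that (i) workloads decrease over time only while the auxiliary system is in synchronicity (otherwise they stay constant between arrivals), (ii) every type-$A$ job is allocated to the $d$ servers with the largest workloads (first $d$ ordered servers) instead of to $d$ random servers, and (iii) among type-$B$ jobs only type-$B_1$ jobs are taken into account; the other type-$B$ jobs are omitted. *)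

From HB Require Import structures.
From mathcomp Require Import all_boot all_order all_algebra all_fingroup.
From mathcomp Require Import reals.
Set Implicit Arguments. Unset Strict Implicit. Unset Printing Implicit Defensive.
Import Order.TTheory GRing.Theory Num.Theory.
Local Open Scope ring_scope.

Section Model.
Variable R : realType.
Variables N d : nat.

(* minimum of a finite family (0 for the empty family, never used) *)
Definition fmin n (f : 'I_n -> R) : R :=
  match n return ('I_n -> R) -> R with
  | 0 => fun _ => 0
  | n'.+1 => fun f => \big[Order.min/f ord0]_(j < n'.+1) f j
  end f.

Definition drain (w : 'I_N -> R) (s : R) : 'I_N -> R :=
  fun i => Num.max (w i - s) 0.

Definition synchronized (w : 'I_N -> R) : bool :=
  [forall i, forall j, w i == w j].

Definition aux_drain (w : 'I_N -> R) (s : R) : 'I_N -> R :=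
  if synchronized w then drain w s else w.

Definition arrive (w : 'I_N -> R) (srv : 'I_d -> 'I_N) (b : 'I_d -> R)
  : 'I_N -> R :=
  fun i => if [exists j, srv j == i]
           then Num.max (fmin (fun j => w (srv j) + b j)) (w i)
           else w i.

Definition typeA (b : 'I_d -> R) : bool := [forall j, b j != 0].
Definition typeC (b : 'I_d -> R) : bool := [forall j, b j == 0].
Definition typeB (b : 'I_d -> R) : bool := ~~ typeA b && ~~ typeC b.

(* replica requirements: 0 if the Bernoulli indicator z is set, else X*K *)
Definition req (K : R) (X : nat -> 'I_d -> R) (z : nat -> 'I_d -> bool)
  (n : nat) (j : 'I_d) : R := if z n j then 0 else X n j * K.

(* srt w is an ordering permutation: position k (0-based) |-> server with
   the (k+1)-th largest workload (omega_(k+1) = w (srt w k)) *)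
Variable srt : ('I_N -> R) -> {perm 'I_N}.

Definition ostat (w : 'I_N -> R) (k : 'I_N) : R := w (srt w k).

Definition rank (w : 'I_N -> R) (i : 'I_N) : nat := ((srt w)^-1)%g i.

Definition typeB1 (w : 'I_N -> R) (srv : 'I_d -> 'I_N) (b : 'I_d -> R) : bool :=
  typeB b &&
  [exists l, [&& b l != 0, rank w (srv l) == N.-1 &
     [forall j, (j != l) ==> (rank w (srv j) < d.-1)%N]]].

(* auxiliary arrival; w = original pre-arrival workloads, v = auxiliary ones *)
Definition aux_arrive (hdN : (d <= N)%N) (w v : 'I_N -> R)
  (srv : 'I_d -> 'I_N) (b : 'I_d -> R) : 'I_N -> R :=
  if typeA b then arrive v (fun j => srt v (widen_ord hdN j)) b
  else if typeC b then arrive v srv b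
  else if typeB1 w srv b then arrive v (fun j => srt v (((srt w)^-1)%g (srv j))) b
  else v.

(* time of the n-th arrival (1-based), with prev_arr a 0 = 0 *)
Definition prev_arr (a : nat -> R) (n : nat) : R :=
  if n is n'.+1 then a n' else 0.

(* (original, auxiliary) workloads just after the n-th arrival *)
Fixpoint states (hdN : (d <= N)%N) (a : nat -> R) (srv : nat -> 'I_d -> 'I_N)
  (b : nat -> 'I_d -> R) (w0 : 'I_N -> R) (n : nat)
  : ('I_N -> R) * ('I_N -> R) :=
  match n with
  | 0 => (w0, w0)
  | n'.+1 =>
      let: (w, v) := states hdN a srv b w0 n' in
      let e := a n' - prev_arr a n' in
      let w' := drain w e in
      (arrive w' (srv n') (b n'),
       aux_arrive hdN w' (aux_drain v e) (srv n') (b n'))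
  end.

(* workloads at time t, for prev_arr a n <= t < a n *)
Definition orig_at hdN a srv b w0 n (t : R) : 'I_N -> R :=
  drain (states hdN a srv b w0 n).1 (t - prev_arr a n).
Definition aux_at hdN a srv b w0 n (t : R) : 'I_N -> R :=
  aux_drain (states hdN a srv b w0 n).2 (t - prev_arr a n).

End Model.

Definition pos0 (N d : nat) (hd : (0 < d)%N) (hdN : (d <= N)%N) : 'I_N :=
  Ordinal (leq_trans hd hdN).

From HB Require Import structures.
From mathcomp Require Import all_boot all_order all_algebra all_fingroup.
From mathcomp Require Import reals.
From mathcomp Require Import lra zify.
Import Order.TTheory GRing.Theory Num.Theory.
Local Open Scope ring_scope.

(* Both systems are compared at the arrival epochs through a counting invariant: for every
   [y], at least as many original as auxiliary servers lie within [y] of their system's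
   maximum workload, and in both systems at least [d] servers share the maximum.  The first
   part is equivalent to the claimed ordering of the gaps.  Draining only brings the original
   workloads closer together, and the auxiliary system drains only when synchronized, in
   which case the invariant forces the original system to be synchronized too.  A job with a
   zero replica cannot raise the original maximum; a type-A job lifts the [d] top auxiliary
   servers by [min_j X_j K], which bounds the rise of the original maximum; a type-B1 job
   lifts the least loaded original server to at least [min (wmax, wmin + X_d K)] and the
   least loaded auxiliary server by at most [X_d K], while the invariant bounds the gap of
   the original minimum by that of the auxiliary one. *)

Lemma card_ord_ltn N k : (k <= N)%N -> #|[set j : 'I_N | (j < k)%N]| = k.
Proof.
move=> hk; rewrite cardsE cardE -(size_map val) /enum_mem -enumT /=.
rewrite -(@filter_map _ _ val (fun x : nat => x < k)%N) val_enum_ord.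
by rewrite (filter_iota_ltn 0 hk) size_iota.
Qed.

Section Fmin.
Context {R : realType} {n : nat}.

Lemma fmin_le (f : 'I_n -> R) j : fmin f <= f j.
Proof.
case: n f j => [|n'] f j; first by case: j.
by rewrite /= (bigD1 j) //= ge_min lexx.
Qed.

Lemma fmin_attained (f : 'I_n -> R) : (0 < n)%N -> exists j, fmin f = f j.
Proof.
case: n f => [|n'] f //= _.
apply: (big_ind (fun x => exists j, x = f j)); first by exists ord0.
- by move=> x y [i ->] [j ->]; rewrite minEle; case: ifP => _; [exists i | exists j].
- by move=> i _; exists i.
Qed.

Lemma le_fmin (f : 'I_n -> R) c : (0 < n)%N -> (forall j, c <= f j) -> c <= fmin f.
Proof. by move=> n_gt0 hc; have [j ->] := fmin_attained f n_gt0. Qed.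

Lemma fmin_eq (f : 'I_n -> R) c : (forall j, c <= f j) -> (exists j, f j = c) -> fmin f = c.
Proof.
move=> hc [j fj]; apply/le_anti; rewrite -{1}fj fmin_le le_fmin //.
by case: n f j {hc fj} => [|n'] ? [].
Qed.

End Fmin.

Section Coupling.
Context {R : realType} {N d : nat} (hd : (0 < d)%N) (hdN : (d <= N)%N).
Context {srt : ('I_N -> R) -> {perm 'I_N}}.
Hypothesis srt_sorted :
  forall (w : 'I_N -> R) (i j : 'I_N), (i <= j)%N -> w (srt w j) <= w (srt w i).

Implicit Types (w v u : 'I_N -> R) (s : 'I_d -> 'I_N) (b : 'I_d -> R) (x y : R).

Definition wmax u := ostat srt u (pos0 hd hdN).

Definition nabove u x := #|[set i | x <= u i]|.

Lemma le_wmax u i : u i <= wmax u.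
Proof. by rewrite /wmax /ostat -{1}(permKV (srt u) i); apply: srt_sorted. Qed.

Lemma wmax_eq u c : (forall i, u i <= c) -> (exists i, u i = c) -> wmax u = c.
Proof. by move=> uc [i ui]; apply/le_anti; rewrite uc -ui le_wmax. Qed.

Lemma wmax_raise u u' : (forall i, u i <= u' i) -> (forall i, u' i <= wmax u) ->
  wmax u' = wmax u.
Proof.
move=> le_uu' u'_le; apply: wmax_eq => //; exists (srt u (pos0 hd hdN)).
by apply/le_anti; rewrite u'_le le_uu'.
Qed.

Lemma eq_wmax {u u'} : u =1 u' -> wmax u = wmax u'.
Proof.
move=> uu'; apply: wmax_eq => [i|]; first by rewrite uu' le_wmax.
by exists (srt u' (pos0 hd hdN)); rewrite uu'.
Qed.

Lemma eq_nabove {u u'} x : u =1 u' -> nabove u x = nabove u' x.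
Proof. by move=> uu'; apply: eq_card => i; rewrite !inE uu'. Qed.

Lemma le_ostatE u (k : 'I_N) x : (x <= ostat srt u k) = (k < nabove u x)%N.
Proof.
apply/idP/idP => [hx|].
  have <- : #|[set srt u j | j in [set j : 'I_N | (j < k.+1)%N]]| = k.+1.
    by rewrite card_imset ?card_ord_ltn //; exact: perm_inj.
  apply: subset_leq_card; apply/subsetP => y /imsetP [j]; rewrite !inE => hj ->.
  by apply: le_trans hx _; apply: srt_sorted.
apply: contraTT; rewrite -ltNge -leqNgt => hx.
have <- : #|[set srt u j | j in [set j : 'I_N | (j < k)%N]]| = k.
  by rewrite card_imset ?card_ord_ltn //; [exact: ltnW | exact: perm_inj].
apply: subset_leq_card; apply/subsetP => i; rewrite !inE => hi.
rewrite -(permKV (srt u) i); apply: imset_f; rewrite inE ltnNge; apply/negP => hk.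
by have := srt_sorted u _ _ hk; rewrite permKV /ostat in hx *; lra.
Qed.

Lemma subset_nabove u u' x x' : (forall i, x <= u i -> x' <= u' i) ->
  (nabove u x <= nabove u' x')%N.
Proof. by move=> h; apply/subset_leq_card/subsetP => i; rewrite !inE; apply: h. Qed.

Lemma nabove_leN u x : (nabove u x <= N)%N.
Proof. by rewrite -[X in (_ <= X)%N]card_ord max_card. Qed.

Lemma nabove_eqN u x : (forall i, x <= u i) -> nabove u x = N.
Proof.
move=> ux; apply/eqP; rewrite eqn_leq nabove_leN -[X in (X <= _)%N]card_ord.
by apply/subset_leq_card/subsetP => i _; rewrite inE.
Qed.

Lemma nabove_full u x : (N <= nabove u x)%N -> forall i, x <= u i.
Proof.
move=> hN i; have /eqP full : [set i | x <= u i] == setT.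
  by rewrite eqEcard subsetT cardsT card_ord.
by have := in_setT i; rewrite -full inE.
Qed.

Lemma nabove_gt_wmax u x : wmax u < x -> nabove u x = 0%N.
Proof.
move=> hx; apply/eqP; rewrite cards_eq0; apply/eqP/setP => i; rewrite !inE.
by apply/negbTE; rewrite -ltNge; apply: le_lt_trans (le_wmax u i) hx.
Qed.

Lemma nabove_update {u u' q} x : (forall i, i != q -> u' i = u i) ->
  (nabove u' x + (x <= u q)%R = nabove u x + (x <= u' q)%R)%N.
Proof.
move=> u'_off; rewrite /nabove (cardD1 q) (cardD1 q [set i | x <= u i]) !inE.
suff -> : #|[predD1 [set i | x <= u' i] & q]| = #|[predD1 [set i | x <= u i] & q]|.
  by lia.
by apply: eq_card => i; rewrite !inE; case: eqP => //= /eqP /u'_off ->.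
Qed.

Lemma nabove_codom {u s x} : injective s -> (forall j, x <= u (s j)) -> (d <= nabove u x)%N.
Proof.
move=> s_inj hs; rewrite -[X in (X <= _)%N]card_ord -(card_codom s_inj).
by apply/subset_leq_card/subsetP => _ /codomP [j ->]; rewrite inE.
Qed.

(* Counting form of the ordering of the gaps [wmax - ostat] (see [less_spread_gap]); unlike
   the gaps themselves it is easy to update when a single workload changes. *)
Definition less_spread w v :=
  forall y, (nabove v (wmax v - y) <= nabove w (wmax w - y))%N.

Definition top_shared u := (d <= nabove u (wmax u))%N.

Definition coupled w v := [/\ less_spread w v, top_shared w & top_shared v].

Lemma less_spread_gap w v i : less_spread w v ->
  wmax w - ostat srt w i <= wmax v - ostat srt v i.
Proof.
move=> hwv; set y := wmax v - ostat srt v i.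
have : (i < nabove v (wmax v - y))%N by rewrite subKr -le_ostatE.
by move=> /leq_trans /(_ (hwv y)); rewrite -le_ostatE; lra.
Qed.

Lemma less_spread_min {w v p q} : less_spread w v ->
  (forall i, w p <= w i) -> (forall i, v q <= v i) -> wmax w - w p <= wmax v - v q.
Proof.
move=> hwv wp vq; suff : wmax w - (wmax v - v q) <= w p by lra.
apply: nabove_full; apply: leq_trans (hwv _); rewrite nabove_eqN // => i.
by rewrite subKr.
Qed.

Lemma top_shared_srt u (k : 'I_N) : top_shared u -> (k < d)%N -> u (srt u k) = wmax u.
Proof.
move=> hu hk; apply/le_anti; rewrite le_wmax /=.
by have := le_ostatE u k (wmax u); rewrite /ostat => ->; rewrite /top_shared in hu; lia.
Qed.

Lemma top_shared_raise {u u'} : (forall i, u i <= u' i) -> wmax u' = wmax u ->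
  top_shared u -> top_shared u'.
Proof.
move=> le_uu' wmax_u'; rewrite /top_shared wmax_u' => /leq_trans; apply.
by apply: subset_nabove => i /le_trans; apply.
Qed.

Lemma less_spread_raise {w w' v} : (forall i, w i <= w' i) -> wmax w' = wmax w ->
  less_spread w v -> less_spread w' v.
Proof.
move=> le_ww' wmax_w' hwv y; rewrite wmax_w'; apply: leq_trans (hwv y) _.
by apply: subset_nabove => i /le_trans; apply.
Qed.

Lemma wmax_drain w e : wmax (drain w e) = Num.max (wmax w - e) 0.
Proof.
apply: wmax_eq => [i|]; last by exists (srt w (pos0 hd hdN)).
by rewrite /drain ge_max !le_max lexx !orbT andbT lerD2r le_wmax.
Qed.

Lemma top_shared_drain w e : top_shared w -> top_shared (drain w e).
Proof.
rewrite /top_shared wmax_drain => /leq_trans; apply; apply: subset_nabove => i wi.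
by rewrite /drain (_ : w i = wmax w) //; apply/le_anti; rewrite le_wmax wi.
Qed.

Lemma less_spread_drain w v e : less_spread w v -> less_spread (drain w e) v.
Proof.
move=> hwv y; case: (ltrP y 0) => hy; first by rewrite nabove_gt_wmax //; lra.
apply: leq_trans (hwv y) _; apply: subset_nabove => i; rewrite wmax_drain /drain.
by rewrite !maxEle; case: (lerP (wmax w - e) 0); case: (lerP (w i - e) 0); lra.
Qed.

Lemma synchronized_wmax v : synchronized v -> forall i, v i = wmax v.
Proof. by move=> /forallP sync i; have /forallP /(_ (srt v (pos0 hd hdN))) /eqP := sync i. Qed.

Lemma coupled_const w v cw cv : (forall i, w i = cw) -> (forall i, v i = cv) -> coupled w v.
Proof.
move=> wE vE; have p0 := pos0 hd hdN.
have wmax_w : wmax w = cw by apply: wmax_eq => [i|]; [rewrite wE | exists p0].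
have wmax_v : wmax v = cv by apply: wmax_eq => [i|]; [rewrite vE | exists p0].
split.
- move=> y; case: (ltrP y 0) => hy; first by rewrite nabove_gt_wmax //; lra.
  by rewrite (nabove_eqN w) ?nabove_leN // => i; rewrite wE wmax_w; lra.
- by rewrite /top_shared nabove_eqN // => i; rewrite wE wmax_w.
- by rewrite /top_shared nabove_eqN // => i; rewrite vE wmax_v.
Qed.

Lemma coupled_drain {w v} e : coupled w v -> coupled (drain w e) (aux_drain v e).
Proof.
case=> hwv hw hv; rewrite /aux_drain; case: ifP => [sync|_]; last first.
  by split; [exact: less_spread_drain | exact: top_shared_drain |].
have vE := synchronized_wmax v sync.
have wE i : w i = wmax w.
  have := hwv 0; rewrite !subr0 (nabove_eqN v) => [/nabove_full w_ge|j]; last by rewrite vE.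
  by apply/le_anti; rewrite le_wmax w_ge.
by apply: (@coupled_const _ _ (Num.max (wmax w - e) 0) (Num.max (wmax v - e) 0)) => i;
  rewrite /drain ?wE ?vE.
Qed.

Definition completion w s b := fmin (fun j => w (s j) + b j).

Lemma le_arrive w s b i : w i <= arrive w s b i.
Proof. by rewrite /arrive; case: ifP => _ //; rewrite le_max lexx orbT. Qed.

Lemma arrive_le w s b i : arrive w s b i <= Num.max (completion w s b) (w i).
Proof. by rewrite /arrive; case: ifP => _; rewrite ?lexx // le_max lexx orbT. Qed.

Lemma arrive_on w s b j : arrive w s b (s j) = Num.max (completion w s b) (w (s j)).
Proof. by rewrite /arrive (_ : [exists j', s j' == s j]) //; apply/existsP; exists j. Qed.

Lemma arrive_cases w s b i : (exists j, s j = i) \/ arrive w s b i = w i.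
Proof.
rewrite /arrive; case: existsP => [[j /eqP sj]|_]; [by left; exists j | by right].
Qed.

Lemma completion_le w s b j : completion w s b <= w (s j) + b j.
Proof. exact: fmin_le. Qed.

Lemma completion_le_wmax w s b k : b k = 0 -> completion w s b <= wmax w.
Proof. by move=> bk; apply: le_trans (completion_le _ _ _ k) _; rewrite bk addr0 le_wmax. Qed.

Lemma wmax_arrive_low {w s b} : completion w s b <= wmax w -> wmax (arrive w s b) = wmax w.
Proof.
move=> low; apply: wmax_raise => [i|i]; first exact: le_arrive.
by apply: le_trans (arrive_le _ _ _ i) _; rewrite ge_max low le_wmax.
Qed.

Lemma wmax_arrive_high {w s b} : wmax w <= completion w s b ->
  wmax (arrive w s b) = completion w s b.
Proof.
move=> high; apply: wmax_eq => [i|]; last first.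
  by exists (s (Ordinal hd)); rewrite arrive_on max_l // (le_trans (le_wmax _ _)).
by apply: le_trans (arrive_le _ _ _ i) _; rewrite ge_max lexx (le_trans (le_wmax _ _)).
Qed.

Lemma wmax_arrive_le w s b j : 0 <= b j -> wmax (arrive w s b) <= wmax w + b j.
Proof.
move=> bj; apply: le_trans (arrive_le _ _ _ _) _; rewrite ge_max; apply/andP; split.
  by apply: le_trans (completion_le _ _ _ j) _; rewrite lerD2r le_wmax.
by rewrite (le_trans (le_wmax _ _)) // lerDl.
Qed.

Lemma top_shared_arrive {w s b} : injective s -> top_shared w -> top_shared (arrive w s b).
Proof.
move=> s_inj hw; case: (lerP (wmax w) (completion w s b)) => [high|low].
  rewrite /top_shared wmax_arrive_high //; apply: (nabove_codom s_inj) => j.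
  by rewrite arrive_on le_max lexx.
by apply: (top_shared_raise (le_arrive w s b)); rewrite ?wmax_arrive_low // ltW.
Qed.

Lemma coupled_eq {w v v'} : v =1 v' -> coupled w v -> coupled w v'.
Proof.
move=> vv' [hwv hw hv]; rewrite /coupled /less_spread /top_shared -(eq_wmax vv').
by split=> // [y|]; rewrite -(eq_nabove _ vv').
Qed.

Lemma arrive_id w s b i : completion w s b <= w i -> arrive w s b i = w i.
Proof. by move=> low; rewrite /arrive; case: ifP => // _; rewrite max_r. Qed.

Lemma arrive_typeC v s b : typeC b -> arrive v s b =1 v.
Proof.
move=> /forallP b0 i; case: (arrive_cases v s b i) => [[j <-]|//].
by apply: arrive_id; apply: le_trans (completion_le _ _ _ j) _; rewrite (eqP (b0 j)) addr0.
Qed.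

Lemma coupled_arrive_zero {w v s b k} : injective s -> b k = 0 -> coupled w v ->
  coupled (arrive w s b) v.
Proof.
move=> s_inj bk [hwv hw hv]; split=> //; last exact: top_shared_arrive.
have wmax_w' := wmax_arrive_low (completion_le_wmax w s b k bk).
exact: less_spread_raise (le_arrive w s b) wmax_w' hwv.
Qed.

Definition top_servers v (j : 'I_d) : 'I_N := srt v (widen_ord hdN j).

Lemma top_servers_inj v : injective (top_servers v).
Proof. by move=> j1 j2 /perm_inj /(congr1 val) /= j12; apply: val_inj. Qed.

Lemma top_servers_wmax v j : top_shared v -> v (top_servers v j) = wmax v.
Proof. by move=> hv; apply: top_shared_srt => //=; exact: ltn_ord. Qed.

Lemma arrive_top_servers {v b} : top_shared v -> (forall j, 0 <= b j) ->
  arrive v (top_servers v) b =1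
  fun i => if [exists j, top_servers v j == i] then wmax v + fmin b else v i.
Proof.
move=> hv b_ge0 i; rewrite /arrive; case: ifP => // _.
have -> : fmin (fun j => v (top_servers v j) + b j) = wmax v + fmin b.
  apply: fmin_eq => [j|]; first by rewrite top_servers_wmax // lerD2l fmin_le.
  by have [j bj] := fmin_attained b hd; exists j; rewrite top_servers_wmax // bj.
by rewrite max_l // (le_trans (le_wmax v i)) // lerDl le_fmin.
Qed.

Lemma wmax_arrive_top {v b} : top_shared v -> (forall j, 0 <= b j) ->
  wmax (arrive v (top_servers v) b) = wmax v + fmin b.
Proof.
move=> hv b_ge0; have vE := arrive_top_servers hv b_ge0; apply: wmax_eq => [i|].
  by rewrite vE; case: ifP => // _; rewrite (le_trans (le_wmax v i)) // lerDl le_fmin.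
exists (top_servers v (Ordinal hd)); rewrite vE.
by case: existsP => // -[]; exists (Ordinal hd).
Qed.

Lemma nabove_arrive_gt_wmax v s b x : wmax v < x -> (nabove (arrive v s b) x <= d)%N.
Proof.
move=> hx; apply: (@leq_trans #|codom s|).
  apply/subset_leq_card/subsetP => i; rewrite inE.
  case: (arrive_cases v s b i) => [[j <-] _|->]; first exact: codom_f.
  by have := le_wmax v i; lra.
by rewrite (leq_trans (card_size _)) ?size_codom ?card_ord.
Qed.

Lemma less_spread_arrive_top w v s b : injective s -> (forall j, 0 <= b j) ->
  coupled w v -> less_spread (arrive w s b) (arrive v (top_servers v) b).
Proof.
move=> s_inj b_ge0 [hwv hw hv] y.
set w' := arrive w s b; set v' := arrive v (top_servers v) b; set m := fmin b.
have wmax_v' : wmax v' = wmax v + m := wmax_arrive_top hv b_ge0.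
have wmax_w' : wmax w' <= wmax w + m.
  by rewrite /m; have [j ->] := fmin_attained b hd; apply: wmax_arrive_le.
case: (ltrP y m) => [y_lt|y_ge].
  case: (ltrP y 0) => [y_neg|y_ge0]; first by rewrite nabove_gt_wmax //; lra.
  apply: (@leq_trans d); first by apply: nabove_arrive_gt_wmax; rewrite wmax_v'; lra.
  apply: leq_trans (top_shared_arrive (b:=b) s_inj hw) _.
  by apply: subset_nabove => i; rewrite -/w'; lra.
apply: (@leq_trans (nabove v (wmax v - (y - m)))).
  apply: subset_nabove => i; rewrite /v'.
  case: (arrive_cases v (top_servers v) b i) => [[j <-] _|->]; last lra.
  by rewrite top_servers_wmax //; lra.
apply: leq_trans (hwv _) _; apply: subset_nabove => i.
by have := le_arrive w s b i; rewrite -/w'; lra.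
Qed.

Lemma coupled_arrive_top w v s b : injective s -> (forall j, 0 <= b j) -> coupled w v ->
  coupled (arrive w s b) (arrive v (top_servers v) b).
Proof.
move=> s_inj b_ge0 hc; have [_ hw hv] := hc.
split; [exact: less_spread_arrive_top | exact: top_shared_arrive |].
exact: top_shared_arrive (top_servers_inj v) hv.
Qed.

Lemma less_spread_raise_min {w v w' v'} p q beta :
  less_spread w v ->
  (forall i, i != p -> w' i = w i) -> (forall i, i != q -> v' i = v i) ->
  (forall i, w p <= w i) -> (forall i, v q <= v i) ->
  w p <= w' p -> Num.min (wmax w) (w p + beta) <= w' p -> wmax w' = wmax w ->
  v' q <= v q + beta -> wmax v' = wmax v ->
  less_spread w' v'.
Proof.
move=> hwv w'E v'E wp vq wp_le wp_ge wmax_w' vq_ge wmax_v' y.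
rewrite wmax_w' wmax_v'; set x := wmax v - y; set xw := wmax w - y.
have le_ww' i : w i <= w' i by case: (eqVneq i p) => [-> | /w'E ->].
have nv := nabove_update x v'E; have nw := nabove_update xw w'E.
have hy : (nabove v x <= nabove w xw)%N := hwv y.
have mono : (nabove w xw <= nabove w' xw)%N.
  by apply: subset_nabove => i /le_trans; apply.
case: (boolP (x <= v q)) => [x_le|x_gt].
  apply: leq_trans (nabove_leN v' x) _; rewrite -(nabove_eqN v x) ?(leq_trans hy) //.
  by move=> i; apply: le_trans x_le (vq i).
rewrite (negbTE x_gt) /= in nv.
case: (boolP (x <= v' q)) => [x_le'|x_gt']; last by rewrite (negbTE x_gt') /= in nv; lia.
rewrite x_le' /= in nv.
have xw_le : xw <= w' p.
  apply: le_trans wp_ge; rewrite le_min; have := le_wmax v' q.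
  by have := less_spread_min hwv wp vq; rewrite /xw /x in x_le' *; lra.
rewrite xw_le /= in nw.
case: (boolP (xw <= w p)) => [xw_le'|xw_gt]; last by rewrite (negbTE xw_gt) /= in nw; lia.
suff -> : nabove w' xw = N by exact: nabove_leN.
by apply: nabove_eqN => i; apply: le_trans xw_le' (le_trans (wp i) (le_ww' i)).
Qed.

Definition same_rank_servers w v s (j : 'I_d) : 'I_N := srt v ((srt w)^-1%g (s j)).

Lemma typeB1_shape {w v s b} : top_shared w -> top_shared v -> typeB1 srt w s b ->
  exists l,
  [/\ forall j, j != l -> w (s j) = wmax w /\ v (same_rank_servers w v s j) = wmax v,
      forall i, w (s l) <= w i & forall i, v (same_rank_servers w v s l) <= v i].
Proof.
move=> hw hv /andP [_ /existsP [l /and3P [_ /eqP rank_l /forallP rank_top]]].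
exists l; split.
- move=> j jl; have rk : ((srt w)^-1%g (s j) < d)%N.
    by apply: leq_trans (implyP (rank_top j) jl) _; rewrite leq_pred.
  by rewrite -[in w _](permKV (srt w) (s j)) !top_shared_srt.
- move=> i; rewrite -(permKV (srt w) i) -(permKV (srt w) (s l)); apply: srt_sorted.
  by rewrite /rank in rank_l; rewrite rank_l; have := ltn_ord ((srt w)^-1%g i); lia.
- move=> i; rewrite -(permKV (srt v) i); apply: srt_sorted.
  by rewrite /rank in rank_l; rewrite rank_l; have := ltn_ord ((srt v)^-1%g i); lia.
Qed.

Lemma coupled_arrive_B1 w v s b : (forall j, 0 <= b j) -> typeB1 srt w s b -> coupled w v ->
  coupled (arrive w s b) (arrive v (same_rank_servers w v s) b).
Proof.
move=> b_ge0 B1 [hwv hw hv]; set s' := same_rank_servers w v s.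
have [l [top minw minv]] := typeB1_shape hw hv B1.
have [k bk] : exists k, b k = 0.
  by case/andP: B1 => /andP [/forallPn [k /negPn /eqP bk] _] _; exists k.
have low_w := completion_le_wmax w s b k bk.
have low_v := completion_le_wmax v s' b k bk.
have [wmax_w' wmax_v'] := (wmax_arrive_low low_w, wmax_arrive_low low_v).
split; last 2 first.
- exact: top_shared_raise (le_arrive w s b) wmax_w' hw.
- exact: top_shared_raise (le_arrive v s' b) wmax_v' hv.
apply: (less_spread_raise_min (s l) (s' l) (b l) hwv) => //.
- move=> i il; case: (arrive_cases w s b i) => [[j ji]|//]; subst i.
  have jl : j != l by apply: contraNneq il => ->.
  by apply: arrive_id; have [-> _] := top j jl.
- move=> i il; case: (arrive_cases v s' b i) => [[j ji]|//]; subst i.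
  have jl : j != l by apply: contraNneq il => ->.
  by apply: arrive_id; have [_ ->] := top j jl.
- exact: le_arrive.
- rewrite arrive_on le_max; apply/orP; left; apply: le_fmin => // j.
  case: (eqVneq j l) => [-> |jl]; first by rewrite ge_min lexx orbT.
  by case: (top j jl) => -> _; rewrite ge_min lerDl b_ge0.
- by rewrite arrive_on ge_max completion_le lerDl b_ge0.
Qed.

Lemma coupled_arrive w v s b : injective s -> (forall j, 0 <= b j) -> coupled w v ->
  coupled (arrive w s b) (aux_arrive srt hdN w v s b).
Proof.
move=> s_inj b_ge0 hc; rewrite /aux_arrive.
case: ifP => [_|notA]; first exact: coupled_arrive_top.
have [k bk] : exists k, b k = 0 by move/negbT/forallPn: notA => [k /negPn /eqP]; exists k.
case: ifP => [C|_].
  by apply: coupled_eq (coupled_arrive_zero s_inj bk hc) => i; rewrite arrive_typeC.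
case: ifP => [B1|_]; [exact: coupled_arrive_B1 | exact: coupled_arrive_zero s_inj bk hc].
Qed.

Lemma coupled_init {w0} : (forall k : 'I_N, (k < d)%N -> ostat srt w0 k = wmax w0) ->
  coupled w0 w0.
Proof.
move=> top; have dN : (d.-1 < N)%N by rewrite prednK.
suff top_w0 : top_shared w0 by split.
have := le_ostatE w0 (Ordinal dN) (wmax w0).
by rewrite top /= ?prednK // lexx => /esym.
Qed.

Lemma coupled_states (a : nat -> R) {srv : nat -> 'I_d -> 'I_N} {b : nat -> 'I_d -> R} {w0} :
  (forall n, injective (srv n)) -> (forall n j, 0 <= b n j) -> coupled w0 w0 ->
  forall n, coupled (states srt hdN a srv b w0 n).1 (states srt hdN a srv b w0 n).2.
Proof.
move=> srv_inj b_ge0 h0; elim=> [|n] //=.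
case: (states _ _ _ _ _ _ n) => w v /= hc.
by apply: coupled_arrive => //; apply: coupled_drain.
Qed.

End Coupling.

Theorem lemma2 (R : realType) (N d : nat) (hd : (0 < d)%N) (hdN : (d <= N)%N)
  (srt : ('I_N -> R) -> {perm 'I_N})
  (hsrt : forall (w : 'I_N -> R) (i j : 'I_N), (i <= j)%N -> w (srt w j) <= w (srt w i))
  (K : R) (hK : 1 <= K)
  (X : nat -> 'I_d -> R) (hX : forall n j, 0 < X n j)
  (z : nat -> 'I_d -> bool)
  (a : nat -> R) (ha0 : 0 < a 0%N) (ha : forall n, a n < a n.+1)
  (srv : nat -> 'I_d -> 'I_N) (hsrv : forall n, injective (srv n))
  (w0 : 'I_N -> R) (hw0 : forall i, 0 <= w0 i)
  (hsync : forall k : 'I_N, (k < d)%N -> ostat srt w0 k = ostat srt w0 (pos0 hd hdN)) :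
  forall (n : nat) (t : R), prev_arr a n <= t -> t < a n ->
  forall i : 'I_N,
    ostat srt (orig_at srt hdN a srv (req K X z) w0 n t) (pos0 hd hdN)
      - ostat srt (orig_at srt hdN a srv (req K X z) w0 n t) i
    <= ostat srt (aux_at srt hdN a srv (req K X z) w0 n t) (pos0 hd hdN)
      - ostat srt (aux_at srt hdN a srv (req K X z) w0 n t) i.
Proof.
(* The invariant holds for arbitrary drain amounts and initial workloads. *)
have req_ge0 n j : 0 <= req K X z n j.
  rewrite /req; case: ifP => _ //.
  by apply: mulr_ge0; [exact: ltW | exact: le_trans ler01 hK].
move=> n t _ _ i.
have hc := coupled_states hd hdN hsrt a hsrv req_ge0 (coupled_init hd hdN hsrt hsync) n.
have [spread _ _] := coupled_drain hd hdN hsrt (t - prev_arr a n) hc.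
exact: less_spread_gap spread.
Qed.
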